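(* Let $R \subseteq S$ be an extension of commutative rings such that $S$ is generated as an $R$-module by $1, f_1, \ldots, f_n$, where $n>0$ and $f_i \in S$. Suppose $S$ has a presentation as an $R$-module $$R^{\oplus q} \xrightarrow{\ \mathbb M\ } R^{\oplus(n+1)} \xrightarrow{\ \varepsilon\ } S \to 0$$ (exact), where $q>0$, $\mathbb M$ is an $(n+1)\times q$ matrix with entries in $R$, and $\varepsilon = [1\ f_1\ \cdots\ f_n]$, i.e. $\varepsilon(a_0,\ldots,a_n)^T = a_0 + a_1f_1+\cdots+a_nf_n$. Let $J$ be the ideal of $S$ generated by all entries of the first row of $\mathbb M$. Then the strict closure $R^*$ of $R$ in $S$ satisfies $R^* \subseteq R + J$.
   Context: For an extension of commutative rings $R \subseteq S$, the strict closure of $R$ in $S$ is $R^* = \{\alpha \in S \mid \alpha\otimes 1 = 1\otimes \alpha \text{ in } S\otimes_R S\}$. *)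

From HB Require Import structures.
From mathcomp Require Import all_boot all_order all_algebra.
Set Implicit Arguments. Unset Strict Implicit. Unset Printing Implicit Defensive.
Import Order.TTheory GRing.Theory Num.Theory.
Local Open Scope ring_scope.

(* The ring extension R ⊆ S is represented by S : comRingType together with a
   subring predicate Rp : {pred S}.  The tensor product S ⊗_R S is the quotient
   of the free abelian group Z[S × S] (formal finite Z-combinations, encoded as
   functions S -> S -> int) by the subgroup generated by the bilinearity and
   R-balancing relations.  [tens_rel Rp] is exactly that subgroup. *)

Definition delta (S : eqType) (x y : S) : S -> S -> int :=
  fun u v => ((u == x) && (v == y))%:Z.

Inductive tens_rel (S : comRingType) (Rp : {pred S}) : (S -> S -> int) -> Prop :=
| tr_addl (x y z : S) :
    tens_rel Rp (fun u v => delta (x + y) z u v - delta x z u v - delta y z u v)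
| tr_addr (x y z : S) :
    tens_rel Rp (fun u v => delta x (y + z) u v - delta x y u v - delta x z u v)
| tr_scal (r x y : S) : r \in Rp ->
    tens_rel Rp (fun u v => delta (r * x) y u v - delta x (r * y) u v)
| tr_zero : tens_rel Rp (fun _ _ => 0)
| tr_add f g : tens_rel Rp f -> tens_rel Rp g -> tens_rel Rp (fun u v => f u v + g u v)
| tr_opp f : tens_rel Rp f -> tens_rel Rp (fun u v => - f u v)
| tr_ext f g : (forall u v, f u v = g u v) -> tens_rel Rp f -> tens_rel Rp g.

(* alpha ⊗ 1 = 1 ⊗ alpha in S ⊗_R S *)
Definition in_strict_closure (S : comRingType) (Rp : {pred S}) (alpha : S) : Prop :=
  tens_rel Rp (fun u v => delta alpha 1 u v - delta 1 alpha u v).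

Definition eps (S : comRingType) (n : nat) (f : 'I_n -> S) (a : 'cV[S]_(n.+1)) : S :=
  a ord0 0 + \sum_(i < n) a (lift ord0 i) 0 * f i.

From HB Require Import structures.
From mathcomp Require Import all_boot all_order all_algebra.
From mathcomp Require Import ring.
Set Implicit Arguments. Unset Strict Implicit. Unset Printing Implicit Defensive.
Import GRing.Theory.
Local Open Scope ring_scope.

(* For
   s in S pick an R-vector lift a(s) with eps(a(s)) = s and let a0(s) be its
   first coordinate.  By exactness two lifts of s differ by M b with b over R,
   whose first coordinate lies in J; hence a0 is well defined modulo J, and
   modulo J it is additive, R-linear and satisfies a0(1) = 1 (lift 1 by the
   first unit vector).  Consequently B(x, y) := x * a0(y) is an R-balanced
   biadditive map S x S -> S/J, so it induces a map on S (x)_R S.  Applied to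
   alpha (x) 1 - 1 (x) alpha = 0 it yields alpha - a0(alpha) in J, i.e.
   alpha in R + J. *)

Section FormalSums.
Variables (T : eqType) (V : zmodType).

Definition covers (g : T -> int) (l : seq T) : Prop :=
  uniq l /\ forall p, g p != 0 -> p \in l.

Definition pairing (F : T -> V) (g : T -> int) (l : seq T) : V :=
  \sum_(p <- l) F p *~ g p.

Lemma pairing_covers (F : T -> V) (g : T -> int) (l1 l2 : seq T) :
  covers g l1 -> covers g l2 -> pairing F g l1 = pairing F g l2.
Proof.
move=> [u1 c1] [u2 c2]; apply: perm_big_supp; apply: uniq_perm.
- exact: filter_uniq.
- exact: filter_uniq.
move=> p; rewrite !mem_filter.
case: (eqVneq (g p) 0) => [->|/[dup] /c1 -> /c2 ->].
  by rewrite mulr0z eqxx.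
by rewrite !andbT.
Qed.

Lemma sum_indicator (F : T -> V) (l : seq T) (x : T) :
  uniq l -> x \in l -> \sum_(p <- l) F p *~ (p == x)%:Z = F x.
Proof.
move=> ul xl; rewrite (bigD1_seq x) //= eqxx big1 ?addr0 // => p.
by move/negbTE ->; rewrite mulr0z.
Qed.

End FormalSums.

(* The universal property of S (x)_R S with respect to maps that are balanced
   only modulo a subgroup K of the target. *)
Section BalancedModulo.
Variables (S : comRingType) (Rp : {pred S}) (V : zmodType) (K : V -> Prop).
Hypotheses (K0 : K 0) (KD : forall x y, K x -> K y -> K (x + y))
  (KN : forall x, K x -> K (- x)).
Variable B : S -> S -> V.
Hypotheses (B_addl : forall x y z, K (B (x + y) z - B x z - B y z))
  (B_addr : forall x y z, K (B x (y + z) - B x y - B x z))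
  (B_bal : forall r x y, r \in Rp -> K (B (r * x) y - B x (r * y))).

Let Bp (p : S * S) : V := B p.1 p.2.
Let unc (g : S -> S -> int) (p : S * S) : int := g p.1 p.2.

Definition killed (g : S -> S -> int) : Prop :=
  exists l, covers (unc g) l /\ K (pairing Bp (unc g) l).

Lemma deltaE (x y : S) (p : S * S) : delta x y p.1 p.2 = (p == (x, y))%:Z.
Proof. by []. Qed.

Lemma pairing_delta2 (p1 p2 : S * S) (l := undup [:: p1; p2])
  (g := unc (fun u v => delta p1.1 p1.2 u v - delta p2.1 p2.2 u v)) :
  covers g l /\ pairing Bp g l = Bp p1 - Bp p2.
Proof.
have ul : uniq l := undup_uniq _.
have inl p : p \in [:: p1; p2] -> p \in l by rewrite mem_undup.
split.
  split=> // p; rewrite /g /unc !deltaE -!surjective_pairing mem_undup !inE.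
  by case: (p == p1); case: (p == p2).
rewrite /pairing /g /unc.
under eq_bigr do rewrite !deltaE -!surjective_pairing mulrzBr.
by rewrite sumrB !sum_indicator ?inl ?inE ?eqxx ?orbT.
Qed.

Lemma pairing_delta3 (p1 p2 p3 : S * S) (l := undup [:: p1; p2; p3])
  (g := unc (fun u v => delta p1.1 p1.2 u v - delta p2.1 p2.2 u v
                        - delta p3.1 p3.2 u v)) :
  covers g l /\ pairing Bp g l = Bp p1 - Bp p2 - Bp p3.
Proof.
have ul : uniq l := undup_uniq _.
have inl p : p \in [:: p1; p2; p3] -> p \in l by rewrite mem_undup.
split.
  split=> // p; rewrite /g /unc !deltaE -!surjective_pairing mem_undup !inE.
  by case: (p == p1); case: (p == p2); case: (p == p3).
rewrite /pairing /g /unc.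
under eq_bigr do rewrite !deltaE -!surjective_pairing !mulrzBr.
by rewrite !sumrB !sum_indicator ?inl ?inE ?eqxx ?orbT.
Qed.

(* Sums of killed combinations are killed: pair both on a common cover. *)
Lemma killed_add (g h : S -> S -> int) :
  killed g -> killed h -> killed (fun u v => g u v + h u v).
Proof.
move=> [l1 [cg Kg]] [l2 [ch Kh]]; set l := undup (l1 ++ l2).
have cover (k : S -> S -> int) li : covers (unc k) li ->
    {subset li <= l1 ++ l2} -> covers (unc k) l.
  by move=> [_ ck] sub; split=> [|p /ck /sub]; rewrite ?undup_uniq ?mem_undup.
have cgl : covers (unc g) l by apply: cover cg _ => p; rewrite mem_cat => ->.
have chl : covers (unc h) l by apply: cover ch _ => p; rewrite mem_cat orbC => ->.
exists l; split.
  split=> [|p]; first exact: undup_uniq.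
  case: (eqVneq (unc g p) 0) => [gp0|/cgl.2 //].
  by rewrite /unc /= -/(unc g p) gp0 add0r => /chl.2.
rewrite /pairing; under eq_bigr do rewrite mulrzDr.
rewrite big_split; change (K (pairing Bp (unc g) l + pairing Bp (unc h) l)).
by rewrite -(pairing_covers _ cg cgl) -(pairing_covers _ ch chl); apply: KD.
Qed.

Lemma tens_rel_killed (g : S -> S -> int) : tens_rel Rp g -> killed g.
Proof.
elim=> {g}.
- move=> x y z; have [cov val] := pairing_delta3 (x + y, z) (x, z) (y, z).
  exists (undup [:: (x + y, z); (x, z); (y, z)]).
  by split; [exact: cov | rewrite val; apply: B_addl].
- move=> x y z; have [cov val] := pairing_delta3 (x, y + z) (x, y) (x, z).
  exists (undup [:: (x, y + z); (x, y); (x, z)]).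
  by split; [exact: cov | rewrite val; apply: B_addr].
- move=> r x y rR; have [cov val] := pairing_delta2 (r * x, y) (x, r * y).
  exists (undup [:: (r * x, y); (x, r * y)]).
  by split; [exact: cov | rewrite val; apply: B_bal].
- by exists [::]; rewrite /pairing big_nil.
- by move=> g h _ kg _ kh; apply: killed_add.
- move=> g _ [l [[ul cl] Kl]]; exists l; split.
    by split=> // p; rewrite /unc oppr_eq0; apply: cl.
  rewrite /pairing /unc; under eq_bigr do rewrite mulrNz.
  by rewrite sumrN; apply: KN.
- move=> g h e _ [l [[ul cl] Kl]]; exists l; split.
    by split=> // p; rewrite /unc -e; apply: cl.
  by rewrite /pairing /unc; under eq_bigr do rewrite -e.
Qed.

Lemma strict_closure_balanced (alpha : S) :
  in_strict_closure Rp alpha -> K (B alpha 1 - B 1 alpha).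
Proof.
move=> /tens_rel_killed [l [cl Kl]].
have [cov val] := pairing_delta2 (alpha, 1) (1, alpha).
by rewrite -[B _ _ - _]val -(pairing_covers _ cl cov).
Qed.

End BalancedModulo.

Section EpsLinear.
Variables (S : comRingType) (n : nat) (f : 'I_n -> S).

Lemma epsD (c d : 'cV[S]_n.+1) : eps f (c + d) = eps f c + eps f d.
Proof.
rewrite /eps !mxE; under eq_bigr do rewrite !mxE mulrDl.
by rewrite big_split /= addrACA.
Qed.

Lemma epsZ (r : S) (c : 'cV[S]_n.+1) : eps f (r *: c) = r * eps f c.
Proof.
rewrite /eps !mxE mulrDr mulr_sumr; congr (_ + _).
by apply: eq_bigr => i _; rewrite !mxE mulrA.
Qed.

Lemma epsB (c d : 'cV[S]_n.+1) : eps f (c - d) = eps f c - eps f d.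
Proof. by rewrite -scaleN1r epsD epsZ mulN1r. Qed.

Lemma eps_unit0 : eps f (delta_mx ord0 0) = 1.
Proof.
rewrite /eps mxE eqxx /= big1 ?addr0 // => i _.
by rewrite mxE [lift _ _ == _]eq_sym (negbTE (neq_lift _ _)) mul0r.
Qed.

End EpsLinear.

Section FirstRowIdeal.
Variables (S : comRingType) (n q : nat) (M : 'M[S]_(n.+1, q)).

Definition in_J (s : S) : Prop :=
  exists c : 'I_q -> S, s = \sum_(j < q) c j * M ord0 j.

Lemma in_J0 : in_J 0.
Proof. by exists (fun _ => 0); rewrite big1 // => j _; rewrite mul0r. Qed.

Lemma in_JD (s t : S) : in_J s -> in_J t -> in_J (s + t).
Proof.
move=> [c ->] [d ->]; exists (fun j => c j + d j).
by rewrite -big_split; apply: eq_bigr => j _; rewrite mulrDl.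
Qed.

Lemma in_JN (s : S) : in_J s -> in_J (- s).
Proof.
move=> [c ->]; exists (fun j => - c j).
by rewrite -sumrN; apply: eq_bigr => j _; rewrite mulNr.
Qed.

Lemma in_JM (x s : S) : in_J s -> in_J (x * s).
Proof.
move=> [c ->]; exists (fun j => x * c j).
by rewrite mulr_sumr; apply: eq_bigr => j _; rewrite mulrA.
Qed.

Lemma in_J_image (b : 'cV[S]_q) : in_J ((M *m b) ord0 0).
Proof.
by exists (fun j => b j 0); rewrite mxE; apply: eq_bigr => j _; rewrite mulrC.
Qed.

End FirstRowIdeal.

Section FirstCoordinate.
Variables (S : comRingType) (Rp : {pred S}) (n q : nat).
Variables (f : 'I_n -> S) (M : 'M[S]_(n.+1, q)).
Hypothesis Rp_subring : GRing.subring_closed Rp.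
HB.instance Definition _ := GRing.isSubringClosed.Build S Rp Rp_subring.

Definition over_R (a : 'cV[S]_n.+1) : bool := [forall i, a i 0 \in Rp].

Hypothesis eps_surj :
  forall s : S, exists a : 'cV[S]_(n.+1), (forall i, a i 0 \in Rp) /\ eps f a = s.
Hypothesis eps_exact :
  forall a : 'cV[S]_(n.+1), (forall i, a i 0 \in Rp) ->
     (eps f a = 0 <-> exists b : 'cV[S]_q, (forall j, b j 0 \in Rp) /\ a = M *m b).

Lemma over_R_lift_exists (s : S) : exists a, over_R a && (eps f a == s).
Proof.
by have [a [aR <-]] := eps_surj s; exists a; rewrite eqxx andbT; apply/forallP.
Qed.

Definition lift_of (s : S) : 'cV[S]_n.+1 := xchoose (over_R_lift_exists s).
Definition coord0 (s : S) : S := lift_of s ord0 0.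

Lemma lift_ofP (s : S) : (forall i, lift_of s i 0 \in Rp) /\ eps f (lift_of s) = s.
Proof.
by have /andP [/forallP aR /eqP ea] := xchooseP (over_R_lift_exists s).
Qed.

Lemma coord0_R (s : S) : coord0 s \in Rp.
Proof. exact: (lift_ofP s).1. Qed.

Lemma coord0_congr (c : 'cV[S]_n.+1) (s : S) :
  (forall i, c i 0 \in Rp) -> eps f c = s -> in_J M (c ord0 0 - coord0 s).
Proof.
move=> cR ecs; have [lR els] := lift_ofP s.
have dR i : (c - lift_of s) i 0 \in Rp by rewrite !mxE rpredB.
have [b [_ eb]] : exists b : 'cV[S]_q, (forall j, b j 0 \in Rp) /\
    c - lift_of s = M *m b by apply/(eps_exact dR); rewrite epsB ecs els subrr.
have -> : c ord0 0 - coord0 s = (c - lift_of s) ord0 0 by rewrite !mxE.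
by rewrite eb; apply: in_J_image.
Qed.

Lemma coord0D (y z : S) : in_J M (coord0 y + coord0 z - coord0 (y + z)).
Proof.
have [yR ey] := lift_ofP y; have [zR ez] := lift_ofP z.
have sR i : (lift_of y + lift_of z) i 0 \in Rp by rewrite mxE rpredD.
by have := coord0_congr sR (s := y + z); rewrite epsD ey ez mxE => /(_ erefl).
Qed.

Lemma coord0Z (r y : S) : r \in Rp -> in_J M (r * coord0 y - coord0 (r * y)).
Proof.
move=> rR; have [yR ey] := lift_ofP y.
have sR i : (r *: lift_of y) i 0 \in Rp by rewrite mxE rpredM.
by have := coord0_congr sR (s := r * y); rewrite epsZ ey mxE => /(_ erefl).
Qed.

Lemma coord0_one : in_J M (1 - coord0 1).
Proof.
have uR i : (delta_mx ord0 0 : 'cV[S]_n.+1) i 0 \in Rp.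
  by rewrite mxE; case: (_ && _); rewrite ?rpred1 ?rpred0.
by have := coord0_congr uR (eps_unit0 f); rewrite mxE !eqxx.
Qed.

End FirstCoordinate.

Theorem theorem2p6 (S : comRingType) (Rp : {pred S}) (n q : nat)
  (f : 'I_n -> S) (M : 'M[S]_(n.+1, q)) :
  GRing.subring_closed Rp ->
  (0 < n)%N -> (0 < q)%N ->
  (forall i j, M i j \in Rp) ->
  (* epsilon is surjective onto S *)
  (forall s : S, exists a : 'cV[S]_(n.+1), (forall i, a i 0 \in Rp) /\ eps f a = s) ->
  (* exactness at R^(n+1): ker epsilon = im M *)
  (forall a : 'cV[S]_(n.+1), (forall i, a i 0 \in Rp) ->
     (eps f a = 0 <-> exists b : 'cV[S]_q, (forall j, b j 0 \in Rp) /\ a = M *m b)) ->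
  forall alpha : S, in_strict_closure Rp alpha ->
  exists r c, r \in Rp /\ alpha = r + \sum_(j < q) c j * M ord0 j.
Proof.
move=> R_subring _ _ _ eps_onto eps_exact alpha strict.
pose a0 := coord0 eps_onto.
(* (x, y) |-> x * a0 y is R-balanced modulo J ... *)
have balanced : in_J M (alpha * a0 1 - 1 * a0 alpha).
  apply: (strict_closure_balanced (@in_J0 _ _ _ M) (@in_JD _ _ _ M)
    (@in_JN _ _ _ M) (B := fun x y => x * a0 y)) strict.
  - move=> x y z /=; have -> : (x + y) * a0 z - x * a0 z - y * a0 z = 0 by ring.
    exact: in_J0.
  - move=> x y z; have -> : x * a0 (y + z) - x * a0 y - x * a0 z =
        - (x * (a0 y + a0 z - a0 (y + z))) by ring.
    by apply/in_JN/in_JM/(coord0D R_subring eps_onto eps_exact).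
  - move=> r x y rR; have -> : r * x * a0 y - x * a0 (r * y) =
        x * (r * a0 y - a0 (r * y)) by ring.
    by apply/in_JM/(coord0Z R_subring eps_onto eps_exact).
(* ... and a0 1 = 1 modulo J, so alpha = a0 alpha modulo J. *)
have [c ec] : in_J M (alpha - a0 alpha).
  have -> : alpha - a0 alpha =
      alpha * (1 - a0 1) + (alpha * a0 1 - 1 * a0 alpha) by ring.
  by apply: in_JD balanced; apply/in_JM/(coord0_one R_subring eps_onto eps_exact).
exists (a0 alpha), c; split; first exact: coord0_R.
by rewrite -ec; ring.
Qed.
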